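(* Let $\mathcal{F}=(W,R)$ be a finite transitive frame and let $X_\mathcal{F}$ be constructed as described in the context. If $X_C$ is a T$_D$ space for every cluster $C$ of $\mathcal{F}$, then $X_\mathcal{F}$ is a T$_D$ space.
   Context: For a space $X$ and $Y\subseteq X$, $\mathrm{d}_X Y$ is the set of limit points of $Y$ ($x$ such that every set $O-\{x\}$, $O$ an open neighbourhood of $x$, meets $Y$). $X$ is T$_D$ if $\mathrm{d}_X\{x\}$ is closed for every $x\in X$. A subset $S$ is dense in $X$ if its closure is $X$, crowded in $X$ if $S\subseteq\mathrm{d}_XS$. A partition is dense (resp. crowded) if all its cells are dense (resp. crowded). For a transitive frame $(W,R)$: clusters are equivalence classes of $\{(x,y):x=y\text{ or }xRyRx\}$; the cluster of $x$ is degenerate if $x$ is irreflexive (then it is $\{x\}$), non-degenerate otherwise; $CRC'$ for clusters iff $xRy$ for representatives; $CR^\uparrow C'$ means $CRC'$ and not $C'RC$. Construction of $X_\mathcal{F}$: let $\mathscr{C}$ be the set of clusters of the finite transitive frame $\mathcal{F}$. For each $C\in\mathscr{C}$ choose a space $X_C$ with a partition $\{X_w:w\in C\}$: if $C=\{w\}$ is degenerate, $X_C=X_w=\{w\}$; if $C=\{w_1,\dots,w_k\}$ is non-degenerate, $X_C$ is a space with a crowded dense $k$-partition with cells labelled $X_{w_1},\dots,X_{w_k}$. The $X_C$ are pairwise disjoint. $X_\mathcal{F}=\bigcup_{C}X_C$, where $O\subseteq X_\mathcal{F}$ is open iff for every $C$, $O\cap X_C$ is open in $X_C$, and if $O\cap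 X_C\ne\emptyset$ then $X_{C'}\subseteq O$ for all $C'$ with $CR^\uparrow C'$. *)

From mathcomp Require Import all_boot.
From mathcomp Require Import boolp classical_sets.
Set Implicit Arguments. Unset Strict Implicit. Unset Printing Implicit Defensive.
Local Open Scope classical_set_scope.

Definition is_topology (T : Type) (A : set T) (O : set (set T)) : Prop :=
  [/\ (forall U, O U -> U `<=` A),
      O A, O set0,
      (forall (I : Type) (F : I -> set T), (forall i, O (F i)) -> O (\bigcup_i F i))
    & (forall U V, O U -> O V -> O (U `&` V))].

Definition sp_closed (T : Type) (A : set T) (O : set (set T)) (S : set T) : Prop :=
  S `<=` A /\ O (A `\` S).

Definition derived (T : Type) (A : set T) (O : set (set T)) (Y : set T) : set T :=
  [set x | A x /\ forall U, O U -> U x -> exists y, [/\ U y, y <> x & Y y]].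

Definition sp_closure (T : Type) (A : set T) (O : set (set T)) (S : set T) : set T :=
  [set x | A x /\ forall U, O U -> U x -> exists y, U y /\ S y].

Definition sp_dense (T : Type) (A : set T) (O : set (set T)) (S : set T) : Prop :=
  S `<=` A /\ sp_closure A O S = A.

Definition sp_crowded (T : Type) (A : set T) (O : set (set T)) (S : set T) : Prop :=
  S `<=` A /\ S `<=` derived A O S.

Definition TD (T : Type) (A : set T) (O : set (set T)) : Prop :=
  forall x, A x -> sp_closed A O (derived A O [set x]).

Definition same_cluster (W : eqType) (R : rel W) (x y : W) : bool :=
  (x == y) || (R x y && R y x).

(** C R^up C' for the clusters of w and v (via representatives) *)
Definition Rup (W : Type) (R : rel W) (w v : W) : bool := R w v && ~~ R v w.

(** The carrier is a type [X] with a labelling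
    [lab : X -> W]; the cell X_w is [lab @^-1` [set w]], and the cluster
    space X_C for C the cluster of w is the set [XC R lab w], with topology
    [tau w] (so [tau] must be constant on clusters). *)
Definition cell (X : Type) (W : Type) (lab : X -> W) (w : W) : set X :=
  [set x | lab x = w].

Definition XC (W : eqType) (R : rel W) (X : Type) (lab : X -> W) (w : W) : set X :=
  [set x | same_cluster R (lab x) w].

Definition XF_open (W : eqType) (R : rel W) (X : Type) (lab : X -> W)
    (tau : W -> set (set X)) (O : set X) : Prop :=
  forall w, tau w (O `&` XC R lab w) /\
    (O `&` XC R lab w <> set0 -> forall v, Rup R w v -> XC R lab v `<=` O).

Definition XF_construction (W : finType) (R : rel W) (X : Type) (lab : X -> W)
    (tau : W -> set (set X)) : Prop :=
  [/\ (forall w, is_topology (XC R lab w) (tau w)),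
      (forall w v, same_cluster R w v -> tau w = tau v),
      (* degenerate cluster {w}: X_C = X_w is a single point *)
      (forall w, ~~ R w w -> exists x : X, cell lab w = [set x])
    & (* non-degenerate cluster: {X_v : v in C} is a crowded dense partition of X_C *)
      (forall w, R w w -> forall v, same_cluster R v w ->
         [/\ cell lab v !=set0,
             sp_dense (XC R lab w) (tau w) (cell lab v)
           & sp_crowded (XC R lab w) (tau w) (cell lab v)])].

From mathcomp Require Import all_boot.
From mathcomp Require Import boolp classical_sets.
Set Implicit Arguments. Unset Strict Implicit. Unset Printing Implicit Defensive.
Local Open Scope classical_set_scope.

(* The derived set of a point x of X_F is d_{X_C}{x}, for C the cluster of x,
   together with all the clusters strictly below C: an open set of X_F meeting a
   cluster below C contains all of C, and the open sets of X_C, enlarged by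
   everything strictly above C, are open in X_F.  Its complement therefore
   meets C in the open set X_C \ d_{X_C}{x}, misses the clusters below C, and
   contains the other clusters; it is upward closed, hence open. *)

Lemma derived_set1P {T : Type} {A : set T} {O : set (set T)} {x y : T} :
  O A -> derived A O [set x] y <-> [/\ A y, y <> x & forall U, O U -> U y -> U x].
Proof.
move=> OA; split.
- case=> Ay dy; have [z [_ zy zx]] := dy A OA Ay.
  split=> [//||U OU Uy]; first by rewrite -zx => /esym.
  by have [t [Ut _ tx]] := dy U OU Uy; rewrite -tx.
- case=> Ay yx Ux; split=> // U OU Uy.
  by exists x; split=> //; [exact: Ux | move/esym].
Qed.

Section Frame.
Variables (W : eqType) (R : rel W).
Hypothesis trR : transitive R.
Local Notation sc := (same_cluster R).

Lemma same_cluster_refl a : sc a a.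
Proof. by rewrite /same_cluster eqxx. Qed.

Lemma same_cluster_sym a b : sc a b -> sc b a.
Proof. by rewrite /same_cluster eq_sym andbC. Qed.

Lemma same_cluster_trans a b c : sc a b -> sc b c -> sc a c.
Proof.
case/orP=> [/eqP-> //|/andP[Rab Rba]].
case/orP=> [/eqP<-|/andP[Rbc Rcb]]; first by rewrite /same_cluster Rab Rba orbT.
by rewrite /same_cluster (trR Rab Rbc) (trR Rcb Rba) orbT.
Qed.

Lemma same_cluster_Rl a b c : sc a b -> R a c -> R b c.
Proof. by case/orP=> [/eqP-> //|/andP[_ Rba] Rac]; exact: trR Rba Rac. Qed.

Lemma same_cluster_Rr a b c : sc a b -> R c a -> R c b.
Proof. by case/orP=> [/eqP-> //|/andP[Rab _] Rca]; exact: trR Rca Rab. Qed.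

Lemma Rup_same_clusterl a a' b : sc a a' -> Rup R a b -> Rup R a' b.
Proof.
move=> aa' /andP[Rab nRba]; rewrite /Rup (same_cluster_Rl aa' Rab).
by apply: contra nRba; exact: same_cluster_Rr (same_cluster_sym aa').
Qed.

Lemma Rup_same_clusterr a b b' : sc b b' -> Rup R a b -> Rup R a b'.
Proof.
move=> bb' /andP[Rab nRba]; rewrite /Rup (same_cluster_Rr bb' Rab).
by apply: contra nRba; exact: same_cluster_Rl (same_cluster_sym bb').
Qed.

Lemma Rup_trans a b c : Rup R a b -> Rup R b c -> Rup R a c.
Proof.
move=> /andP[Rab _] /andP[Rbc nRcb]; rewrite /Rup (trR Rab Rbc).
by apply: contra nRcb => Rca; exact: trR Rca Rab.
Qed.

Lemma Rup_irr a : ~~ Rup R a a.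
Proof. by rewrite /Rup andbN. Qed.

Lemma Rup_not_same_cluster a b : Rup R a b -> ~~ sc a b.
Proof.
move=> Rupab; apply/negP => ab.
by move: (Rup_same_clusterr (same_cluster_sym ab) Rupab); rewrite (negbTE (Rup_irr a)).
Qed.

End Frame.

Section XF.
Variables (W : eqType) (R : rel W) (X : Type) (lab : X -> W)
  (tau : W -> set (set X)).
Hypotheses (trR : transitive R)
  (tau_top : forall w, is_topology (XC R lab w) (tau w))
  (tau_same_cluster : forall w v, same_cluster R w v -> tau w = tau v).
Local Notation sc := (same_cluster R).
Local Notation XC := (XC R lab).
Local Notation XF_open := (XF_open R lab tau).

Definition up_set (w : W) : set X := [set z | Rup R w (lab z)].
Definition down_set (w : W) : set X := [set z | Rup R (lab z) w].

Lemma tau_sub w U : tau w U -> U `<=` XC w.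
Proof. by case: (tau_top w) => sub _ _ _ _; exact: sub. Qed.

Lemma tau_XC w : tau w (XC w).
Proof. by case: (tau_top w). Qed.

Lemma tau_set0 w : tau w set0.
Proof. by case: (tau_top w). Qed.

Lemma XF_openP O :
  (forall w, tau w (O `&` XC w)) ->
  (forall z y, O z -> Rup R (lab z) (lab y) -> O y) -> XF_open O.
Proof.
move=> trace_open up_closed w; split=> // /eqP/set0P[z [Oz zw]] v wv y yv.
apply: up_closed Oz _; apply: (Rup_same_clusterr trR (same_cluster_sym yv)).
exact: (Rup_same_clusterl trR (same_cluster_sym zw) wv).
Qed.

Lemma XF_open_setT : XF_open setT.
Proof. by apply: XF_openP => [w|//]; rewrite setTI; exact: tau_XC. Qed.

Lemma XF_open_setU_up w U : tau w U -> XF_open (U `|` up_set w).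
Proof.
move=> tauU; have UXC := tau_sub tauU.
apply: XF_openP => [v|z y Oz zy]; last first.
  right; case: Oz => [/UXC zw|wz]; rewrite /up_set /=.
    exact: (Rup_same_clusterl trR zw zy).
  exact: (Rup_trans trR wz zy).
have [vw|nvw] := boolP (sc v w).
  suff -> : (U `|` up_set w) `&` XC v = U by rewrite (tau_same_cluster vw).
  apply/seteqP; split=> [z [[//|wz] zv]|z Uz].
    move/negP: (Rup_not_same_cluster trR wz); case.
    exact: same_cluster_sym (same_cluster_trans trR zv vw).
  by split; [left | exact: (same_cluster_trans trR (UXC z Uz) (same_cluster_sym vw))].
have [wv|nwv] := boolP (Rup R w v).
  suff -> : (U `|` up_set w) `&` XC v = XC v by exact: tau_XC.
  apply/seteqP; split=> [z [] //|z zv]; split=> //; right.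
  exact: (Rup_same_clusterr trR (same_cluster_sym zv) wv).
suff -> : (U `|` up_set w) `&` XC v = set0 by exact: tau_set0.
apply/seteqP; split=> // z [[/UXC zw|wz] zv].
  by move/negP: nvw; apply; exact: (same_cluster_trans trR (same_cluster_sym zv) zw).
by move/negP: nwv; apply; exact: (Rup_same_clusterr trR zv wz).
Qed.

Lemma XF_derived_set1 x :
  derived setT XF_open [set x] =
  derived (XC (lab x)) (tau (lab x)) [set x] `|` down_set (lab x).
Proof.
apply/seteqP; split=> y; have yy := same_cluster_refl R (lab y).
- case/(derived_set1P XF_open_setT)=> _ yx Ux.
  have [yC|nyC] := boolP (sc (lab y) (lab x)).
    left; apply/(derived_set1P (tau_XC _)); split=> // U tauU Uy.
    case: (Ux _ (XF_open_setU_up tauU) (or_introl Uy)) => // xup.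
    by case/negP: (Rup_irr R (lab x)).
  right; case: (Ux _ (XF_open_setU_up (tau_XC (lab y))) (or_introl yy)) => //.
  by move=> /same_cluster_sym xy; move/negP: nyC.
- case=> [/(derived_set1P (tau_XC _)) [yC yx Ux]|yx];
    apply/(derived_set1P XF_open_setT); split=> //.
  + move=> U OU Uy; case: (OU (lab x)) => tauUC _.
    by case: (Ux _ tauUC (conj Uy yC)).
  + by move=> exy; move: yx; rewrite /down_set /= exy; apply/negP/Rup_irr.
  + move=> U OU Uy; case: (OU (lab y)) => _ /(_ _ (lab x) yx); apply.
      by move/seteqP=> [/(_ y (conj Uy yy))].
    exact: same_cluster_refl.
Qed.

Lemma XF_closed_derived_set1 x :
  sp_closed (XC (lab x)) (tau (lab x)) (derived (XC (lab x)) (tau (lab x)) [set x]) ->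
  sp_closed setT XF_open (derived setT XF_open [set x]).
Proof.
set dC := derived _ _ [set x] => -[_ tau_compl]; rewrite XF_derived_set1.
have dCX : dC `<=` XC (lab x) by move=> y [].
split=> //; apply: XF_openP => [v|z y [_ nDz] zy]; last first.
  split=> // -[dCy|yx]; apply: nDz; right; rewrite /down_set /=.
    exact: (Rup_same_clusterr trR (dCX y dCy) zy).
  exact: (Rup_trans trR zy yx).
have [vx|nvx] := boolP (sc v (lab x)).
  suff -> : (setT `\` (dC `|` down_set (lab x))) `&` XC v = XC (lab x) `\` dC.
    by rewrite (tau_same_cluster vx).
  apply/seteqP; split=> [z [[_ nDz] zv]|z [zx ndCz]].
    by split; [exact: (same_cluster_trans trR zv vx) | move=> dCz; apply: nDz; left].
  split; last exact: (same_cluster_trans trR zx (same_cluster_sym vx)).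
  split=> // -[//|zx']; case/negP: (Rup_not_same_cluster trR zx'); exact: zx.
have [vxup|nvxup] := boolP (Rup R v (lab x)).
  suff -> : (setT `\` (dC `|` down_set (lab x))) `&` XC v = set0 by exact: tau_set0.
  apply/seteqP; split=> // z [[_ nDz] zv]; apply: nDz; right.
  exact: (Rup_same_clusterl trR (same_cluster_sym zv) vxup).
suff -> : (setT `\` (dC `|` down_set (lab x))) `&` XC v = XC v by exact: tau_XC.
apply/seteqP; split=> [z [] //|z zv]; split=> //; split=> // -[/dCX zx|zx].
  by move/negP: nvx; apply; exact: (same_cluster_trans trR (same_cluster_sym zv) zx).
by move/negP: nvxup; apply; exact: (Rup_same_clusterl trR zv zx).
Qed.

Lemma XF_TD : (forall w, TD (XC w) (tau w)) -> TD setT XF_open.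
Proof. by move=> TD_XC x _; apply/XF_closed_derived_set1/TD_XC/same_cluster_refl. Qed.

End XF.

Theorem lemma4 (W : finType) (R : rel W) (X : Type) (lab : X -> W)
    (tau : W -> set (set X)) :
  transitive R ->
  XF_construction R lab tau ->
  (forall w : W, TD (XC R lab w) (tau w)) ->
  TD setT (XF_open R lab tau).
Proof. by move=> trR [tau_top tau_same_cluster _ _]; exact: XF_TD. Qed.
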